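(* Let $A=\{a_1,a_2,\ldots,a_k\}$ be a set of $k\ge1$ distinct positive integers, let $\alpha$ be a positive integer with $\alpha\le k$, let $\tau$ be a permutation of $\{1,2,\ldots,k\}$, and let $A_{\tau(j)}=\{a_{\tau(1)},\ldots,a_{\tau(j)}\}$ for $j=1,\ldots,k$, with $A_{\tau(0)}=\emptyset$. Then \[ (a)\quad f(A)= \sum_{j=1}^k \sum_{ d\mid a_{\tau(j)} } \mu(d)\, 2^{v(A_{\tau(j-1)},d)}, \] \[ (b) \quad f_{\alpha}(A) = \sum_{j=1}^k \sum_{ d\mid a_{\tau(j)} } \mu(d) \binom{v(A_{\tau(j-1)},d)}{\alpha -1}. \]
   Context: $\mu$ is the Möbius function. For a finite set $B$ of positive integers and a positive integer $d$, $v(B,d)$ is the number of multiples of $d$ in $B$ (so $v(\emptyset,d)=0$). $f(A)$ is the number of nonempty subsets $X\subseteq A$ with $\gcd(X)=1$, and $f_\alpha(A)$ is the number of subsets $X\subseteq A$ with $|X|=\alpha$ and $\gcd(X)=1$. Binomial coefficients satisfy $\binom{m}{0}=1$ and $\binom{m}{k}=0$ when $k>m$. *)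

From HB Require Import structures.
From mathcomp Require Import all_boot all_order all_algebra all_fingroup.
From mathcomp Require Import finmap.
Set Implicit Arguments. Unset Strict Implicit. Unset Printing Implicit Defensive.
Import GRing.Theory Num.Theory.
Local Open Scope fset_scope.

Definition moebius (n : nat) : int :=
  if n == 0%N then 0%R
  else if all (fun p => logn p n == 1%N) (primes n)
       then ((-1) ^+ size (primes n))%R
       else 0%R.

(* gcd of a finite set of naturals (gcd of the empty set is 0). *)
Definition gcdset (X : {fset nat}) : nat := \big[gcdn/0%N]_(x <- X) x.

Definition v (B : {fset nat}) (d : nat) : nat := #|` [fset x in B | d %| x]|.

Definition f (A : {fset nat}) : nat :=
  #|` [fset X in fpowerset A | (X != fset0) && (gcdset X == 1%N)]|.

Definition f_alpha (alpha : nat) (A : {fset nat}) : nat :=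
  #|` [fset X in fpowerset A | (#|` X| == alpha) && (gcdset X == 1%N)]|.

From HB Require Import structures.
From mathcomp Require Import all_boot all_order all_algebra all_fingroup.
From mathcomp Require Import finmap.
Import GRing.Theory Num.Theory.
Local Open Scope fset_scope.

(* When a new element x is added to B, the new subsets with gcd 1 are the
   sets {x} u Y, Y a subset of B, with gcd(x, gcd Y) = 1.  Moebius inversion
   over the divisors d of x turns this condition into "d divides every
   element of Y", so these sets are counted by
   sum_(d | x) mu(d) 2^v(B,d), resp. sum_(d | x) mu(d) C(v(B,d), alpha-1)
   when |Y| = alpha - 1.  Adding the elements of A one at a time in the order
   tau and telescoping gives both formulas. *)

Section Moebius.
Local Open Scope ring_scope.

Lemma moebius_prime_mul p d : prime p -> (0 < d)%N ->
  moebius (p * d)%N = if (p %| d)%N then 0 else - moebius d.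
Proof.
move=> p_pr d_gt0; have p_gt0 := prime_gt0 p_pr.
have pd_gt0 : (0 < p * d)%N by rewrite muln_gt0 p_gt0.
rewrite /moebius !gtn_eqF //.
have lognS : (logn p (p * d) = (logn p d).+1)%N.
  by rewrite lognM // logn_prime // eqxx.
have [p_d | p_nd] := boolP (p %| d)%N.
  rewrite ifN //; apply/allP => /(_ p); rewrite mem_primes p_pr pd_gt0 dvdn_mulr //.
  rewrite lognS eqSS => /(_ isT); apply/negP.
  by rewrite -lt0n logn_gt0 mem_primes p_pr d_gt0 p_d.
have p_nprimes : p \notin primes d by rewrite mem_primes (negbTE p_nd) !andbF.
have primesM_p : perm_eq (primes (p * d)) (p :: primes d).
  apply: uniq_perm; rewrite ?primes_uniq //= ?p_nprimes ?primes_uniq //.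
  by move=> q; rewrite primesM // primes_prime // inE.
rewrite (perm_all _ primesM_p) (perm_size primesM_p) /= lognS.
have -> : logn p d = 0%N by apply/eqP; rewrite eqn0Ngt logn_gt0.
rewrite (eq_in_all (a2 := fun q => logn q d == 1%N)); last first.
  move=> q q_d; rewrite lognM // logn_prime //.
  by have /negbTE -> : q != p by apply: contraNneq p_nprimes => <-.
by rewrite eqxx /=; case: (all _ _); rewrite ?oppr0 // exprS mulN1r.
Qed.

Lemma sum_divisors_prime_mul_dvd (R : nmodType) p m (F : nat -> R) :
  prime p -> (0 < m)%N ->
  \sum_(d <- divisors (p * m) | (p %| d)%N) F d = \sum_(d <- divisors m) F (p * d)%N.
Proof.
move=> p_pr m_gt0; have p_gt0 := prime_gt0 p_pr.
have pm_gt0 : (0 < p * m)%N by rewrite muln_gt0 p_gt0.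
rewrite -big_filter -(big_map (muln p) xpredT); apply: perm_big.
apply: uniq_perm; first by rewrite filter_uniq ?divisors_uniq.
  by rewrite map_inj_uniq ?divisors_uniq // => x y /eqP; rewrite eqn_pmul2l // => /eqP.
move=> d; rewrite mem_filter -dvdn_divisors //; apply/andP/mapP.
  case=> /dvdnP[e ->]; rewrite mulnC dvdn_pmul2l // => e_m.
  by exists e; rewrite 1?mulnC -?dvdn_divisors.
case=> e; rewrite -dvdn_divisors // => e_m ->.
by rewrite dvdn_mulr // dvdn_pmul2l.
Qed.

Lemma sum_divisors_prime_mul_ndvd (R : nmodType) p m (F : nat -> R) :
  prime p -> (0 < m)%N ->
  \sum_(d <- divisors (p * m) | ~~ (p %| d)%N) F d =
  \sum_(d <- divisors m | ~~ (p %| d)%N) F d.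
Proof.
move=> p_pr m_gt0; have pm_gt0 : (0 < p * m)%N by rewrite muln_gt0 prime_gt0.
rewrite -big_filter -[RHS]big_filter; apply: perm_big.
apply: uniq_perm; rewrite ?filter_uniq ?divisors_uniq // => d.
rewrite !mem_filter -!dvdn_divisors //; have [//|p_nd /=] := boolP (p %| d)%N.
by rewrite Gauss_dvdr // coprime_sym prime_coprime.
Qed.

Lemma sum_moebius_divisors n : (0 < n)%N ->
  \sum_(d <- divisors n) moebius d = (n == 1)%N%:Z.
Proof.
move=> n_gt0; have [n_lt1 | n_gt1 | ->] := ltngtP n 1; last by rewrite big_seq1.
  by rewrite ltnNge n_gt0 in n_lt1.
have [p p_pr /dvdnP[m nE]] : exists2 p, prime p & (p %| n)%N.
  by exists (pdiv n); [apply: pdiv_prime | apply: pdiv_dvd].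
move: n_gt0; rewrite nE mulnC muln_gt0 => /andP[_ m_gt0].
rewrite (bigID (fun d => p %| d)%N) /= sum_divisors_prime_mul_dvd //.
rewrite sum_divisors_prime_mul_ndvd //.
rewrite (eq_big_seq (fun d => if (p %| d)%N then 0 else - moebius d)); last first.
  move=> d; rewrite -dvdn_divisors // => d_m.
  by rewrite moebius_prime_mul ?(dvdn_gt0 m_gt0).
rewrite (bigID (fun d => p %| d)%N) /= big1 ?add0r; last by move=> d ->.
by rewrite (eq_bigr (fun d => - moebius d)) ?sumrN ?addNr // => d /negbTE ->.
Qed.

Lemma sum_moebius_dvd x h : (0 < x)%N -> (0 < h)%N -> (h %| x)%N ->
  \sum_(d <- divisors x | (d %| h)%N) moebius d = (h == 1)%N%:Z.
Proof.
move=> x_gt0 h_gt0 h_x; rewrite -sum_moebius_divisors // -big_filter.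
congr (\sum_(d <- _) _); apply: (irr_sorted_eq ltn_trans ltnn).
- by apply: sorted_filter; [exact: ltn_trans | exact: sorted_divisors_ltn].
- exact: sorted_divisors_ltn.
move=> d; rewrite mem_filter -!dvdn_divisors //.
by apply/andP/idP => [[]//| d_h]; rewrite (dvdn_trans d_h h_x).
Qed.

Lemma sum_moebius_coprime x g : (0 < x)%N ->
  \sum_(d <- divisors x) moebius d * (d %| g)%N%:Z = (coprime x g)%:Z.
Proof.
move=> x_gt0; have h_gt0 : (0 < gcdn x g)%N by rewrite gcdn_gt0 x_gt0.
rewrite /coprime -(sum_moebius_dvd _ _ x_gt0 h_gt0 (dvdn_gcdl x g)) [RHS]big_mkcond.
apply: eq_big_seq => d; rewrite -dvdn_divisors // dvdn_gcd => ->.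
by case: (d %| g)%N; rewrite ?mulr1 ?mulr0.
Qed.

End Moebius.

Lemma dvdn_gcdset d X : (d %| gcdset X)%N = all (dvdn d) X.
Proof.
rewrite /gcdset; elim: (X : seq nat) => [|y s IH]; first by rewrite big_nil dvdn0.
by rewrite big_cons dvdn_gcd IH.
Qed.

Lemma gcdsetU1 x Y : x \notin Y -> gcdset (x |` Y) = gcdn x (gcdset Y).
Proof. by move=> xY; rewrite /gcdset big_fsetU1. Qed.

Definition nsubsets (B : {fset nat}) (P : pred {fset nat}) : nat :=
  #|` [fset X in fpowerset B | P X]|.

Lemma nsubsets_sum B P : nsubsets B P = (\sum_(X <- fpowerset B | P X) 1)%N.
Proof. by rewrite /nsubsets card_fset_sum1 -big_fset_condE. Qed.

Lemma nsubsets0 P : nsubsets fset0 P = P fset0.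
Proof. by rewrite nsubsets_sum fpowerset0 big_mkcond big_seq_fset1; case: (P fset0). Qed.

Lemma nsubsetsE B P : ((nsubsets B P)%:Z = \sum_(X <- fpowerset B) (P X : nat)%:Z)%R.
Proof.
rewrite nsubsets_sum (big_morph Posz PoszD (erefl (Posz 0))) big_mkcond.
by apply: eq_bigr => X _; case: (P X).
Qed.

Lemma eq_in_nsubsets B (P Q : pred {fset nat}) :
  (forall Y, Y `<=` B -> P Y = Q Y) -> nsubsets B P = nsubsets B Q.
Proof.
move=> eqPQ; rewrite !nsubsets_sum big_seq_cond [RHS]big_seq_cond; apply: eq_bigl => Y.
by rewrite fpowersetE; case: (boolP (Y `<=` B)) => // /eqPQ ->.
Qed.

Lemma nsubsetsT B : nsubsets B predT = (2 ^ #|`B|)%N.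
Proof. by rewrite -card_fpowerset nsubsets_sum card_fset_sum1. Qed.

Lemma nsubsets_gcdset_dvd B (Q : pred {fset nat}) d :
  nsubsets B (fun Y => Q Y && (d %| gcdset Y)%N) = nsubsets [fset z in B | d %| z]%N Q.
Proof.
rewrite !nsubsets_sum; apply: eq_fbigl_cond => X; rewrite !inE /= !fpowersetE dvdn_gcdset.
case: (Q X); rewrite ?andbF ?andbT //.
apply/andP/fsubsetP => [[/fsubsetP sXB /allP dX] z zX | sXBd].
  by rewrite !inE sXB ?dX.
split; first by apply/fsubsetP => z /sXBd; rewrite !inE => /andP[].
by apply/allP => z /sXBd; rewrite !inE => /andP[].
Qed.

Lemma fpowersetU1_mem (x : nat) (B : {fset nat}) : x \notin B ->
  [fset X in fpowerset (x |` B) | x \in X] = [fset x |` Y | Y in fpowerset B].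
Proof.
move=> xB; apply/fsetP => X; rewrite !inE fpowersetE; apply/andP/imfsetP => /=.
  case=> sXxB xX; exists (X `\ x); last by rewrite fsetD1K.
  by rewrite fpowersetE fsubDset.
case=> Y; rewrite fpowersetE => sYB ->.
by rewrite fsetUS // fset1U1.
Qed.

Lemma nsubsetsU1 x (B : {fset nat}) P : x \notin B ->
  nsubsets (x |` B) P = (nsubsets B P + nsubsets B (fun Y => P (x |` Y)))%N.
Proof.
move=> xB; rewrite !nsubsets_sum.
rewrite (big_fsetIDcond _ (fun X : {fset nat} => x \in X)) [LHS]addnC.
congr (_ + _)%N.
  apply: eq_fbigl_cond => X; rewrite !inE /= !fpowersetE.
  by rewrite -fsubsetD1 fsetU1K.
have notin_sub Y : Y `<=` B -> x \notin Y.
  by move=> sYB; apply: contra xB => /(fsubsetP sYB).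
rewrite fpowersetU1_mem // big_mkcond /= big_imfset => [|Y1 Y2].
  by rewrite -big_mkcond.
rewrite /= !fpowersetE => /notin_sub xY1 /notin_sub xY2 eqY.
by rewrite -(fsetU1K xY1) eqY fsetU1K.
Qed.

Lemma nsubsets_card_eq B m : nsubsets B (fun Y => #|`Y| == m) = 'C(#|`B|, m).
Proof.
elim/fset1U_rect: B m => [|x B xB IH] m.
  by rewrite nsubsets0 cardfs0 bin0n; case: m.
have cardU1 Y : Y `<=` B -> #|`x |` Y| = #|`Y|.+1.
  by move=> sYB; rewrite cardfsU1 (contra (fsubsetP sYB x) xB).
rewrite nsubsetsU1 // cardfsU1 xB IH; case: m => [|m].
  rewrite !bin0 (eq_in_nsubsets _ _ pred0) => [|Y /cardU1 -> //].
  by rewrite nsubsets_sum big_pred0_eq.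
by rewrite binS (eq_in_nsubsets _ _ (fun Y => #|`Y| == m)) ?IH // => Y /cardU1 ->.
Qed.

Lemma nsubsets_coprime_gcdset B (Q : pred {fset nat}) x : (0 < x)%N ->
  ((nsubsets B (fun Y => Q Y && coprime x (gcdset Y)))%:Z =
   \sum_(d <- divisors x) moebius d * (nsubsets [fset z in B | d %| z]%N Q)%:Z)%R.
Proof.
move=> x_gt0; under eq_bigr do rewrite -nsubsets_gcdset_dvd nsubsetsE mulr_sumr.
rewrite nsubsetsE exchange_big /=; apply: eq_bigr => Y _.
case: (Q Y) => /=; last by rewrite big1 // => d _; rewrite mulr0.
by rewrite -sum_moebius_coprime.
Qed.

Lemma f_fsetU1 x B : (0 < x)%N -> x \notin B ->
  ((f (x |` B))%:Z = (f B)%:Z + \sum_(d <- divisors x) moebius d * (2 ^ v B d)%:Z)%R.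
Proof.
move=> x_gt0 xB; rewrite /f -!/(nsubsets _ _) nsubsetsU1 // PoszD; congr (_ + _)%R.
rewrite (eq_in_nsubsets _ _ (fun Y => predT Y && coprime x (gcdset Y))) => [|Y sYB].
  by rewrite nsubsets_coprime_gcdset //; under eq_bigr do rewrite nsubsetsT.
have xY : x \notin Y by apply: contra xB => /(fsubsetP sYB).
by rewrite gcdsetU1 // -cardfs_gt0 cardfsU1 xY.
Qed.

Lemma f_alpha_fsetU1 b x B : (0 < x)%N -> x \notin B ->
  ((f_alpha b.+1 (x |` B))%:Z =
   (f_alpha b.+1 B)%:Z + \sum_(d <- divisors x) moebius d * ('C(v B d, b))%:Z)%R.
Proof.
move=> x_gt0 xB; rewrite /f_alpha -!/(nsubsets _ _) nsubsetsU1 // PoszD; congr (_ + _)%R.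
rewrite (eq_in_nsubsets _ _ (fun Y => (#|`Y| == b) && coprime x (gcdset Y))) => [|Y sYB].
  by rewrite nsubsets_coprime_gcdset //; under eq_bigr do rewrite nsubsets_card_eq.
have xY : x \notin Y by apply: contra xB => /(fsubsetP sYB).
by rewrite gcdsetU1 // cardfsU1 xY.
Qed.

Section PrefixSums.
Variables (k : nat) (b : 'I_k -> nat).
Hypothesis b_inj : injective b.

Definition prefix (m : nat) : {fset nat} :=
  [fset b i | i in [pred i : 'I_k | (i < m)%N]].

Lemma prefix0 : prefix 0 = fset0.
Proof. by apply/fsetP => z; rewrite inE; apply/imfsetP => -[i]. Qed.

Lemma prefix_all : prefix k = [fset b i | i in 'I_k].
Proof.
by apply/fsetP => z; apply/imfsetP/imfsetP => -[i _ ->]; exists i; rewrite // unfold_in /=.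
Qed.

Lemma prefixS m (lt_mk : (m < k)%N) : prefix m.+1 = b (Ordinal lt_mk) |` prefix m.
Proof.
apply/fsetP => z; rewrite !inE; apply/imfsetP/orP => [[i /=]|].
  rewrite unfold_in /= ltnS leq_eqVlt => /orP[/eqP i_m|i_m] ->.
    by left; rewrite (_ : i = Ordinal lt_mk) //; apply: val_inj.
  by right; apply/imfsetP; exists i; rewrite ?unfold_in.
case=> [/eqP ->|/imfsetP[i /= i_m ->]].
  by exists (Ordinal lt_mk); rewrite ?unfold_in /=.
by exists i; move: i_m; rewrite // !unfold_in /= => /ltnW.
Qed.

Lemma notin_prefix m (lt_mk : (m < k)%N) : b (Ordinal lt_mk) \notin prefix m.
Proof.
apply/imfsetP => -[i /=]; rewrite unfold_in /= => i_m /b_inj i_eq.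
by rewrite -i_eq ltnn in i_m.
Qed.

Lemma sum_prefix_telescope (R : nmodType)
    (F : {fset nat} -> R) (G : {fset nat} -> nat -> R) :
  F fset0 = 0%R ->
  (forall B i, b i \notin B -> F (b i |` B) = (F B + G B (b i))%R) ->
  F [fset b i | i in 'I_k] = (\sum_(j < k) G (prefix j) (b j))%R.
Proof.
move=> F0 FU1; rewrite -prefix_all.
suff sumF m : (m <= k)%N ->
    F (prefix m) = (\sum_(j < k | (j < m)%N) G (prefix j) (b j))%R.
  by rewrite sumF //; apply: eq_bigl => j; rewrite ltn_ord.
elim: m => [_|m IH lt_mk]; first by rewrite prefix0 F0 big_pred0.
rewrite prefixS FU1 ?notin_prefix // IH 1?ltnW //.
rewrite [RHS](bigD1 (Ordinal lt_mk)) //= [RHS]addrC.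
by congr (_ + _)%R; apply: eq_bigl => j; rewrite ltnS ltn_neqAle andbC -val_eqE.
Qed.

End PrefixSums.

Lemma imfset_perm (T : choiceType) k (a : 'I_k -> T) (s : 'S_k) :
  [fset a (s i) | i in 'I_k] = [fset a i | i in 'I_k].
Proof.
apply/fsetP => z; apply/imfsetP/imfsetP => -[i _ ->]; first by exists (s i).
by exists (s^-1 i)%g; rewrite ?permKV.
Qed.

Theorem theorem3p2 (k : nat) (a : 'I_k -> nat) (alpha : nat) (tau : 'S_k) :
  (1 <= k)%N ->
  injective a ->
  (forall i, 0 < a i)%N ->
  (1 <= alpha <= k)%N ->
  let A := [fset a i | i in 'I_k] in
  let Apre (j : 'I_k) := [fset a (tau i) | i in [pred i : 'I_k | (i < j)%N]] in
  ((f A)%:Z =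
     \sum_(j < k) \sum_(d <- divisors (a (tau j)))
        moebius d * (2 ^ v (Apre j) d)%:Z)%R /\
  ((f_alpha alpha A)%:Z =
     \sum_(j < k) \sum_(d <- divisors (a (tau j)))
        moebius d * ('C(v (Apre j) d, alpha.-1))%:Z)%R.
Proof.
move=> _ a_inj a_gt0 /andP[alpha_gt0 _] A Apre.
have atau_inj : injective (fun i => a (tau i)) by move=> i j /a_inj/perm_inj.
rewrite /A -(@imfset_perm _ _ a tau); split.
  apply: (sum_prefix_telescope _ _ atau_inj _ (fun B => (f B)%:Z)%R
           (fun B x => \sum_(d <- divisors x) moebius d * (2 ^ v B d)%:Z)%R) => [|B i].
    by rewrite /f -/(nsubsets _ _) nsubsets0.
  exact/f_fsetU1/a_gt0.
case: alpha alpha_gt0 => // c _ /=.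
apply: (sum_prefix_telescope _ _ atau_inj _ (fun B => (f_alpha c.+1 B)%:Z)%R
         (fun B x => \sum_(d <- divisors x) moebius d * 'C(v B d, c)%:Z)%R) => [|B i].
  by rewrite /f_alpha -/(nsubsets _ _) nsubsets0.
exact/f_alpha_fsetU1/a_gt0.
Qed.
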